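(* Let $N\ge1$ and $\eta\in[0,1]$. For bit strings $l_y\in\{0,1\}^N$ with $l_y^1=0$, $y=1,\dots,2^{N-1}$, consider the quantum functional $$(\mathcal B_N)_Q=\eta\sum_{y=1}^{2^{N-1}}\Big|\sum_{x=1}^N(-1)^{l_y^x}\,\mathrm{Tr}\big[\rho_{AB}\,(A_x\otimes B_y)\big]\Big|,$$ where $\rho_{AB}$ is a density operator on $\mathcal H_A\otimes\mathcal H_B$ (finite-dimensional Hilbert spaces of arbitrary dimension) and $A_x$, $B_y$ are self-adjoint operators with $A_x^2=\mathbb I$, $B_y^2=\mathbb I$. Then the supremum of $(\mathcal B_N)_Q$ over all such states and observables equals $\eta\,2^{N-1}\sqrt N$, and this value is attained when $A_1,\dots,A_N$ pairwise anticommute, i.e. $A_xA_{x'}+A_{x'}A_x=2\delta_{x,x'}\mathbb I$.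
   Context: Alice's unsharp measurements are the POVMs $\{E_{\pm|x}=\tfrac12(\mathbb I\pm\eta A_x)\}$, so that the effective observable is $\eta A_x$; $\eta$ is the unsharpness parameter. *)

(* Scalars: an arbitrary numClosedFieldType C (e.g. the
   complex numbers); operators on finite-dimensional spaces are square
   matrices, H_A (x) H_B = C^(dA*dB) with the Kronecker product tensmx. *)
From HB Require Import structures.
From mathcomp Require Import all_boot all_order all_algebra.
From mathcomp Require Import sesquilinear.
From mathcomp.real_closed Require Import mxtens.
Set Implicit Arguments. Unset Strict Implicit. Unset Printing Implicit Defensive.
Import Order.TTheory GRing.Theory Num.Theory.
Local Open Scope ring_scope.

Section Defs.
Variable C : numClosedFieldType.

Definition adjmx m n (M : 'M[C]_(m, n)) : 'M[C]_(n, m) := map_mx Num.conj M^T.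

Definition selfadj n (M : 'M[C]_n) : Prop := adjmx M = M.

Definition psd n (M : 'M[C]_n) : Prop :=
  selfadj M /\ forall v : 'cV[C]_n, 0 <= (adjmx v *m M *m v) 0 0.

Definition density n (rho : 'M[C]_n) : Prop := psd rho /\ \tr rho = 1.

Definition observable n (M : 'M[C]_n) : Prop := selfadj M /\ M *m M = 1%:M.

(* bit strings l in {0,1}^N (true = 1) with first bit l^1 = 0 *)
Definition firstbit0 N (l : {ffun 'I_N -> bool}) : bool :=
  [forall i : 'I_N, (nat_of_ord i == 0%N) ==> ~~ l i].

(* the quantum functional (B_N)_Q for unsharpness eta; the 2^(N-1)
   measurements B_y of Bob are indexed by their bit strings l_y *)
Definition BNQ N dA dB (eta : C) (rho : 'M[C]_(dA * dB))
    (A : 'I_N -> 'M[C]_dA) (B : {ffun 'I_N -> bool} -> 'M[C]_dB) : C :=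
  eta * \sum_(l : {ffun 'I_N -> bool} | firstbit0 l)
          `| \sum_(x < N) (-1) ^+ l x * \tr (rho *m tensmx (A x) (B l)) |.
End Defs.

From HB Require Import structures.
From mathcomp Require Import all_boot all_order all_algebra.
From mathcomp Require Import sesquilinear.
From mathcomp.real_closed Require Import mxtens.
From mathcomp Require Import ring.
Set Implicit Arguments. Unset Strict Implicit. Unset Printing Implicit Defensive.
Import Order.TTheory GRing.Theory Num.Theory.
Local Open Scope ring_scope.

(* Put [S_l = sum_x (-1)^(l_x) A_x] and [c = sqrt N].  Positivity of [rho]
   applied to the square of [S_l (x) 1 - c (1 (x) B_l)] gives
   [2 c |<S_l (x) B_l>| <= <S_l^2 (x) 1> + c^2].  Summed over the 2^(N-1)
   strings [l] the cross terms [A_x A_x'] of [S_l^2] cancel, so the sum of the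
   right-hand sides is [2^(N-1) (N + c^2)], whence the bound [2^(N-1) c].
   Equality holds for [N] pairwise anticommuting involutions [A_x], built
   recursively from the Pauli matrices [X] and [Z], with [B_l = S_l / c] and
   the maximally entangled state, for which [<S_l (x) S_l> = Tr (S_l^T S_l) / d
   = N]. *)

Section Adjoint.
Variable C : numClosedFieldType.

Lemma adjmxK m n (A : 'M[C]_(m, n)) : adjmx (adjmx A) = A.
Proof. by apply/matrixP => i j; rewrite !mxE conjCK. Qed.

Lemma adjmxM m n p (A : 'M[C]_(m, n)) (B : 'M[C]_(n, p)) :
  adjmx (A *m B) = adjmx B *m adjmx A.
Proof. by rewrite /adjmx trmx_mul map_mxM. Qed.

Lemma adjmxD m n (A B : 'M[C]_(m, n)) : adjmx (A + B) = adjmx A + adjmx B.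
Proof. by rewrite /adjmx linearD map_mxD. Qed.

Lemma adjmxN m n (A : 'M[C]_(m, n)) : adjmx (- A) = - adjmx A.
Proof. by rewrite /adjmx linearN map_mxN. Qed.

Lemma adjmxZ m n a (A : 'M[C]_(m, n)) : adjmx (a *: A) = a^* *: adjmx A.
Proof. by apply/matrixP => i j; rewrite !mxE rmorphM. Qed.

Lemma adjmx1 n : adjmx (1%:M : 'M[C]_n) = 1%:M.
Proof. by rewrite /adjmx trmx1 map_mx1. Qed.

Lemma adjmx_sum m n I (r : seq I) (P : pred I) (F : I -> 'M[C]_(m, n)) :
  adjmx (\sum_(i <- r | P i) F i) = \sum_(i <- r | P i) adjmx (F i).
Proof. by rewrite /adjmx linear_sum map_mx_sum. Qed.

Lemma adjmx_tens m n p q (A : 'M[C]_(m, n)) (B : 'M[C]_(p, q)) :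
  adjmx (A *t B) = adjmx A *t adjmx B.
Proof. by rewrite /adjmx trmx_tens map_mxT. Qed.

Lemma adjmx_delta m n (i : 'I_m) (j : 'I_n) :
  adjmx (delta_mx i j : 'M[C]_(m, n)) = delta_mx j i.
Proof. by rewrite /adjmx trmx_delta map_delta_mx. Qed.

End Adjoint.

Section TensorLinear.
Variable R : pzRingType.

Lemma tensmxDl m n p q (A B : 'M[R]_(m, n)) (M : 'M[R]_(p, q)) :
  (A + B) *t M = A *t M + B *t M.
Proof. by apply/matrixP => i j; rewrite !mxE mulrDl. Qed.

Lemma tensmxNl m n p q (A : 'M[R]_(m, n)) (M : 'M[R]_(p, q)) :
  (- A) *t M = - (A *t M).
Proof. by apply/matrixP => i j; rewrite !mxE mulNr. Qed.

Lemma tensmxNr m n p q (A : 'M[R]_(m, n)) (M : 'M[R]_(p, q)) :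
  A *t (- M) = - (A *t M).
Proof. by apply/matrixP => i j; rewrite !mxE mulrN. Qed.

Lemma tensmxZl m n p q a (A : 'M[R]_(m, n)) (M : 'M[R]_(p, q)) :
  (a *: A) *t M = a *: (A *t M).
Proof. by apply/matrixP => i j; rewrite !mxE mulrA. Qed.

Lemma tensmx_suml m n p q I (r : seq I) (P : pred I) (F : I -> 'M[R]_(m, n))
    (M : 'M[R]_(p, q)) :
  (\sum_(i <- r | P i) F i) *t M = \sum_(i <- r | P i) F i *t M.
Proof. exact: (big_morph _ (fun A B => tensmxDl A B M) (tens0mx M)). Qed.

Lemma tensmx11 m n : (1%:M : 'M[R]_m) *t (1%:M : 'M[R]_n) = 1%:M.
Proof.
apply/matrixP => i j.
case: (mxtens_indexP i) => i0 i1; case: (mxtens_indexP j) => j0 j1.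
rewrite tensmxE !mxE (inj_eq (can_inj (@mxtens_indexK _ _))) xpair_eqE.
by case: (i0 == j0); case: (i1 == j1); rewrite ?mulr1 ?mul0r ?mulr0.
Qed.

Lemma mxtrace_tens m n (A : 'M[R]_m) (B : 'M[R]_n) :
  \tr (A *t B) = \tr A * \tr B.
Proof. by rewrite /mxtrace mulr_sum; apply: eq_bigr => k _; rewrite mxE. Qed.

Lemma mxtrace_delta_mul n (i j : 'I_n) (X : 'M[R]_n) :
  \tr (delta_mx i j *m X) = X j i.
Proof.
rewrite /mxtrace (bigD1 i) //= big1 => [|k /negbTE nki].
  rewrite mxE (bigD1 j) //= big1 ?addr0 => [|k /negbTE nkj].
    by rewrite mxE !eqxx mul1r.
  by rewrite mxE nkj andbF mul0r.
by rewrite mxE big1 // => l _; rewrite mxE nki mul0r.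
Qed.

End TensorLinear.

Lemma ler_norml_bounds (R : numDomainType) (x y : R) :
  x <= y -> - x <= y -> `|x| <= y.
Proof.
move=> xy Nxy; have y_ge0 : 0 <= y.
  by rewrite -(pmulrn_lge0 _ (ltn0Sn 1)) mulr2n -(addNr x) lerD.
by rewrite real_ler_norml ?(ler_real xy) ?ger0_real // lerNl Nxy xy.
Qed.

Section Observables.
Variable C : numClosedFieldType.

Lemma observableN n (Y : 'M[C]_n) : observable Y -> observable (- Y).
Proof.
by case=> Y_sa YY; split; rewrite /selfadj ?adjmxN ?Y_sa // mulmxN mulNmx opprK.
Qed.

Lemma psd_trace_adjmx_mul n (rho Z : 'M[C]_n) :
  psd rho -> 0 <= \tr (rho *m (adjmx Z *m Z)).
Proof.
case=> _ rho_ge0; rewrite mulmxA mxtrace_mulC mulmxA /mxtrace.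
apply: sumr_ge0 => i _.
have := rho_ge0 (adjmx (row i Z)); rewrite adjmxK -row_mul.
suff -> : (row i (Z *m rho) *m adjmx (row i Z)) 0 0 =
          (Z *m rho *m adjmx Z) i i by [].
by rewrite !mxE; apply: eq_bigr => k _; rewrite !mxE.
Qed.

(* Expand [0 <= Tr (rho Z^* Z)] for the self-adjoint
   [Z = X (x) 1 - c (1 (x) Y)]. *)
Lemma trace_tens_observable_le dA dB (rho : 'M[C]_(dA * dB)) (X : 'M[C]_dA)
    (Y : 'M[C]_dB) c :
  density rho -> selfadj X -> observable Y -> 0 <= c ->
  2 * c * \tr (rho *m (X *t Y)) <= \tr (rho *m ((X *m X) *t 1%:M)) + c ^+ 2.
Proof.
move=> [rho_psd tr_rho] X_sa [Y_sa YY] c_ge0.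
set Z := X *t 1%:M - c *: (1%:M *t Y).
have Z_sa : adjmx Z = Z.
  by rewrite /Z adjmxD adjmxN adjmxZ !adjmx_tens X_sa Y_sa !adjmx1 geC0_conj.
have := psd_trace_adjmx_mul Z rho_psd; rewrite Z_sa /Z.
rewrite mulmxBl !mulmxBr -!scalemxAl -!scalemxAr !tensmx_mul !mulmx1 !mul1mx.
rewrite YY tensmx11 scalerA !raddfB /= !mxtraceZ mulmx1 tr_rho -subr_ge0.
by congr (0 <= _); ring.
Qed.

Lemma norm_trace_tens_observable_le dA dB (rho : 'M[C]_(dA * dB))
    (X : 'M[C]_dA) (Y : 'M[C]_dB) c :
  density rho -> selfadj X -> observable Y -> 0 <= c ->
  2 * c * `|\tr (rho *m (X *t Y))| <= \tr (rho *m ((X *m X) *t 1%:M)) + c ^+ 2.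
Proof.
move=> rho_dens X_sa Y_obs c_ge0.
rewrite -[2 * c]ger0_norm ?mulr_ge0 // -normrM; apply: ler_norml_bounds.
  exact: trace_tens_observable_le.
have := trace_tens_observable_le rho_dens X_sa (observableN Y_obs) c_ge0.
by rewrite tensmxNr mulmxN raddfN mulrN.
Qed.

End Observables.

Definition flip N (y : 'I_N) (l : {ffun 'I_N -> bool}) : {ffun 'I_N -> bool} :=
  [ffun i => (i == y) (+) l i].

Lemma flipK N (y : 'I_N) : involutive (flip y).
Proof. by move=> l; apply/ffunP => i; rewrite !ffunE addbA addbb. Qed.

Lemma firstbit0_flip N (y : 'I_N) l :
  nat_of_ord y != 0%N -> firstbit0 (flip y l) = firstbit0 l.
Proof.
move=> y_neq0; apply: eq_forallb => i; rewrite ffunE.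
by case: (i =P y) => [->|]; rewrite ?(negbTE y_neq0).
Qed.

Lemma firstbit0_ord0 n (l : {ffun 'I_n.+1 -> bool}) : firstbit0 l = ~~ l ord0.
Proof.
apply/forallP/idP => [/(_ ord0) // | l0 i].
by apply/implyP => /eqP i0; rewrite (_ : i = ord0) //; apply: val_inj.
Qed.

Section Signs.
Variable R : numDomainType.

Lemma sumr_firstbit0_const N (a : R) : (0 < N)%N ->
  \sum_(l : {ffun 'I_N -> bool} | firstbit0 l) a = (2 ^ (N - 1))%:R * a.
Proof.
case: N => // n _; rewrite subn1 /=.
set S := \sum_(l | firstbit0 l) a.
have compl_S : \sum_(l : {ffun 'I_n.+1 -> bool} | ~~ firstbit0 l) a = S.
  rewrite (reindex_inj (inv_inj (@flipK _ ord0))) /=.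
  by apply: eq_bigl => l; rewrite !firstbit0_ord0 ffunE negbK.
have : S *+ 2 = ((2 ^ n)%:R * a) *+ 2.
  rewrite mulr2n -{2}compl_S.
  transitivity (\sum_(l : {ffun 'I_n.+1 -> bool}) a).
    by rewrite [RHS](bigID (@firstbit0 n.+1)).
  rewrite sumr_const card_ffun card_bool card_ord.
  by rewrite expnS mulnC mulrnA mulr_natl.
exact: pmulrnI.
Qed.

(* For [x != x'], flipping the bit of whichever of [x], [x'] is not the first
   one pairs the strings with opposite signs. *)
Lemma sum_sign_firstbit0 N (x x' : 'I_N) : x != x' ->
  \sum_(l | firstbit0 l) (-1) ^+ (l x (+) l x') = 0 :> R.
Proof.
move=> x_neq_x'.
set y := if nat_of_ord x == 0%N then x' else x.
have y_neq0 : nat_of_ord y != 0%N.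
  rewrite /y; case: (nat_of_ord x =P 0%N) => [x0 | /eqP //].
  move: x_neq_x'; apply: contraNN => /eqP x'0.
  by apply/eqP/val_inj; rewrite /= x0 x'0.
have flip_xor l : flip y l x (+) flip y l x' = ~~ (l x (+) l x').
  have x'_neq_x : (x' == x) = false by rewrite eq_sym (negbTE x_neq_x').
  rewrite !ffunE /y; case: ifP => _.
    by rewrite eqxx (negbTE x_neq_x') addbN.
  by rewrite eqxx x'_neq_x addNb.
set S := \sum_(l | _) _.
have : S = - S.
  rewrite {1}/S (reindex_inj (inv_inj (flipK y))) /= -sumrN.
  apply: eq_big => [l | l _]; first exact: firstbit0_flip.
  by rewrite flip_xor signrN.
move/eqP; rewrite -addr_eq0 -mulr2n -mulr_natr mulf_eq0 pnatr_eq0 orbF.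
exact: eqP.
Qed.

End Signs.

Section SignedSum.
Variable R : numDomainType.

Definition signed_sum N d (A : 'I_N -> 'M[R]_d) (l : {ffun 'I_N -> bool}) :
    'M[R]_d :=
  \sum_(x < N) (-1) ^+ l x *: A x.

Lemma trace_tens_signed_sum N dA dB (rho : 'M[R]_(dA * dB))
    (A : 'I_N -> 'M[R]_dA) (B : 'M[R]_dB) (l : {ffun 'I_N -> bool}) :
  \sum_(x < N) (-1) ^+ l x * \tr (rho *m (A x *t B)) =
  \tr (rho *m (signed_sum A l *t B)).
Proof.
rewrite tensmx_suml mulmx_sumr raddf_sum; apply: eq_bigr => x _ /=.
by rewrite tensmxZl -scalemxAr mxtraceZ.
Qed.

Lemma trmx_signed_sum N d (A : 'I_N -> 'M[R]_d) l :
  (forall x, (A x)^T = A x) -> (signed_sum A l)^T = signed_sum A l.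
Proof.
move=> A_sym; rewrite linear_sum; apply: eq_bigr => x _.
by rewrite linearZ /= A_sym.
Qed.

Lemma signed_sum_sqr N d (A : 'I_N -> 'M[R]_d) l :
  signed_sum A l *m signed_sum A l =
  \sum_(x < N) \sum_(x' < N) (-1) ^+ (l x (+) l x') *: (A x *m A x').
Proof.
rewrite mulmx_suml; apply: eq_bigr => x _; rewrite mulmx_sumr.
by apply: eq_bigr => x' _; rewrite -scalemxAl -scalemxAr scalerA signr_addb.
Qed.

(* Averaging over the bit strings kills the cross terms [A x *m A x'],
   [x != x']. *)
Lemma sum_signed_sum_sqr N d (A : 'I_N -> 'M[R]_d) : (0 < N)%N ->
  (forall x, A x *m A x = 1%:M) ->
  \sum_(l | firstbit0 l) signed_sum A l *m signed_sum A l =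
  ((2 ^ (N - 1))%:R * N%:R) *: 1%:M.
Proof.
move=> N_gt0 AA.
under eq_bigr => l _ do rewrite signed_sum_sqr.
rewrite exchange_big /=.
transitivity (\sum_(x < N) ((2 ^ (N - 1))%:R : R) *: (1%:M : 'M_d)); last first.
  by rewrite sumr_const card_ord scalerMnl mulr_natr.
apply: eq_bigr => x _.
rewrite exchange_big /= (bigD1 x) //= [X in _ + X]big1 => [|x' x'_neq_x].
  rewrite addr0 AA -scaler_suml.
  under eq_bigr do rewrite addbb expr0.
  by rewrite sumr_firstbit0_const // mulr1.
by rewrite -scaler_suml sum_sign_firstbit0 ?scale0r // eq_sym.
Qed.

(* Symmetrising the double sum turns the products into anticommutators. *)
Lemma signed_sum_sqr_anticomm N d (A : 'I_N -> 'M[R]_d) l :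
  (forall x x', A x *m A x' + A x' *m A x = (2 * (x == x')%:R) *: 1%:M) ->
  signed_sum A l *m signed_sum A l = N%:R *: 1%:M.
Proof.
move=> A_ac; set T := _ *m _.
have T2 : T *+ 2 = (N%:R *: 1%:M) *+ 2.
  rewrite mulr2n {1}/T signed_sum_sqr {1}/T signed_sum_sqr.
  rewrite [in X in _ + X]exchange_big -big_split /=.
  transitivity (\sum_(x < N) (2%:R : R) *: (1%:M : 'M_d)).
    apply: eq_bigr => x _.
    rewrite -big_split /= (bigD1 x) //= [X in _ + X]big1 => [|x' x'x].
      by rewrite addr0 addbb expr0 !scale1r A_ac eqxx mulr1.
    by rewrite addbC -scalerDr A_ac eq_sym (negbTE x'x) mulr0 scale0r scaler0.
  rewrite sumr_const card_ord !scalerMnl.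
  by rewrite -[2 *+ N]mulr_natl -[N%:R *+ 2]mulr_natr.
by apply/matrixP => i j; apply: (@pmulrnI _ 2) => //; rewrite -!mulmxnE T2.
Qed.

End SignedSum.

Section UpperBound.
Variable C : numClosedFieldType.

Lemma selfadj_signed_sum N d (A : 'I_N -> 'M[C]_d) l :
  (forall x, selfadj (A x)) -> selfadj (signed_sum A l).
Proof.
move=> A_sa; rewrite /selfadj adjmx_sum; apply: eq_bigr => x _.
by rewrite adjmxZ rmorph_sign A_sa.
Qed.

Lemma sum_correlators_le N dA dB (rho : 'M[C]_(dA * dB))
    (A : 'I_N -> 'M[C]_dA) (B : {ffun 'I_N -> bool} -> 'M[C]_dB) :
  (0 < N)%N -> density rho -> (forall x, observable (A x)) ->
  (forall l, firstbit0 l -> observable (B l)) ->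
  \sum_(l | firstbit0 l)
     `| \sum_(x < N) (-1) ^+ l x * \tr (rho *m (A x *t B l)) |
  <= (2 ^ (N - 1))%:R * sqrtC N%:R.
Proof.
move=> N_gt0 rho_dens A_obs B_obs.
set c := sqrtC (N%:R : C).
have c_gt0 : 0 < c by rewrite sqrtC_gt0 ltr0n.
have N_c2 : N%:R = c ^+ 2 by rewrite sqrtCK.
have A_sa x : selfadj (A x) by case: (A_obs x).
have AA x : A x *m A x = 1%:M by case: (A_obs x).
rewrite -(ler_pM2l (_ : 0 < 2 * c)) ?mulr_gt0 // mulr_sumr.
under eq_bigr => l _ do rewrite trace_tens_signed_sum.
apply: le_trans (_ : _ <= \sum_(l | firstbit0 l)
  (\tr (rho *m ((signed_sum A l *m signed_sum A l) *t 1%:M)) + c ^+ 2)) _.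
  apply: ler_sum => l l_fb0; apply: norm_trace_tens_observable_le => //.
  - exact: selfadj_signed_sum.
  - exact: B_obs.
  - exact: ltW.
rewrite big_split /= -raddf_sum -mulmx_sumr -tensmx_suml sum_signed_sum_sqr //=.
rewrite tensmxZl tensmx11 -scalemxAr mxtraceZ mulmx1 rho_dens.2.
rewrite sumr_firstbit0_const // N_c2.
by rewrite le_eqVlt; apply/predU1P; left; ring.
Qed.

End UpperBound.

Section Clifford.
Variable R : comPzRingType.

Definition pauliX : 'M[R]_2 := \matrix_(i, j) (i != j)%:R.
Definition pauliZ : 'M[R]_2 := \matrix_(i, j) ((i == j)%:R * (-1) ^+ i).

Ltac pauli_entrywise :=
  apply/matrixP => -[[|[|?]] ?] -[[|[|?]] ?] //;
  rewrite !mxE ?big_ord_recl ?big_ord0 ?mxE /=;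
  rewrite ?(mulr1n, mulr0n, expr0, expr1, mulr1, mul1r, mulr0, mul0r, addr0,
            add0r, mulrN1, opprK, oppr0).

Lemma pauliX_sqr : pauliX *m pauliX = 1%:M. Proof. by pauli_entrywise. Qed.
Lemma pauliZ_sqr : pauliZ *m pauliZ = 1%:M. Proof. by pauli_entrywise. Qed.
Lemma pauliXZ : pauliX *m pauliZ = - (pauliZ *m pauliX).
Proof. by pauli_entrywise. Qed.
Lemma trmx_pauliX : pauliX^T = pauliX. Proof. by pauli_entrywise. Qed.
Lemma trmx_pauliZ : pauliZ^T = pauliZ. Proof. by pauli_entrywise. Qed.

Fixpoint clifford_dim k : nat :=
  if k is k'.+1 then (clifford_dim k' * 2)%N else 1%N.

Lemma clifford_dim_gt0 k : (0 < clifford_dim k)%N.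
Proof. by elim: k => //= k IH; rewrite muln_gt0 IH. Qed.

Fixpoint clifford k : 'I_k -> 'M[R]_(clifford_dim k) :=
  match k return 'I_k -> 'M[R]_(clifford_dim k) with
  | 0 => fun _ => 1%:M
  | k'.+1 => fun i => if unlift ord_max i is Some j then clifford j *t pauliX
                      else 1%:M *t pauliZ
  end.

Lemma clifford_lift k (j : 'I_k) :
  clifford (lift ord_max j) = clifford j *t pauliX.
Proof. by rewrite /= liftK. Qed.

Lemma clifford_max k : clifford (@ord_max k) = 1%:M *t pauliZ.
Proof. by rewrite /= unlift_none. Qed.

Lemma clifford_sqr k (i : 'I_k) : clifford i *m clifford i = 1%:M.
Proof.
elim: k i => [[] //|k IH] i; case: (unliftP ord_max i) => [j ->|->].
  by rewrite clifford_lift tensmx_mul IH pauliX_sqr tensmx11.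
by rewrite clifford_max tensmx_mul mulmx1 pauliZ_sqr tensmx11.
Qed.

Lemma trmx_clifford k (i : 'I_k) : (clifford i)^T = clifford i.
Proof.
elim: k i => [[] //|k IH] i; case: (unliftP ord_max i) => [j ->|->].
  by rewrite clifford_lift trmx_tens IH trmx_pauliX.
by rewrite clifford_max trmx_tens trmx1 trmx_pauliZ.
Qed.

Lemma clifford_anticomm k (i i' : 'I_k) :
  i != i' -> clifford i *m clifford i' = - (clifford i' *m clifford i).
Proof.
elim: k i i' => [[] //|k IH] i i'.
case: (unliftP ord_max i) => [j ->|->];
  case: (unliftP ord_max i') => [j' ->|->].
- rewrite (inj_eq lift_inj) => /IH j_j'.
  by rewrite !clifford_lift !tensmx_mul j_j' pauliX_sqr tensmxNl.
- by rewrite clifford_lift clifford_max !tensmx_mul mulmx1 mul1mx pauliXZ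
    tensmxNr.
- by rewrite clifford_lift clifford_max !tensmx_mul mulmx1 mul1mx pauliXZ
    tensmxNr opprK.
- by rewrite eqxx.
Qed.

Lemma clifford_anticommutator k (i i' : 'I_k) :
  clifford i *m clifford i' + clifford i' *m clifford i =
  (2 * (i == i')%:R) *: 1%:M.
Proof.
have [<-|i_neq_i'] := eqVneq i i'.
  by rewrite clifford_sqr mulr1 scaler_nat mulr2n.
by rewrite clifford_anticomm // addNr mulr0 scale0r.
Qed.

End Clifford.

Section Optimum.
Variable C : numClosedFieldType.

Lemma selfadj_pauliX : selfadj (pauliX C).
Proof.
rewrite /selfadj /adjmx trmx_pauliX; apply/matrixP => i j.
by rewrite !mxE rmorph_nat.
Qed.

Lemma selfadj_pauliZ : selfadj (pauliZ C).
Proof.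
rewrite /selfadj /adjmx trmx_pauliZ; apply/matrixP => i j.
by rewrite !mxE rmorphM rmorph_nat rmorph_sign.
Qed.

Lemma selfadj_clifford k (i : 'I_k) : selfadj (clifford C i).
Proof.
rewrite /selfadj; elim: k i => [[] //|k IH] i.
case: (unliftP ord_max i) => [j ->|->].
  by rewrite clifford_lift adjmx_tens IH selfadj_pauliX.
by rewrite clifford_max adjmx_tens adjmx1 selfadj_pauliZ.
Qed.

Lemma observable_clifford k (i : 'I_k) : observable (clifford C i).
Proof. by split; [exact: selfadj_clifford | exact: clifford_sqr]. Qed.

Definition max_entangled_vec d : 'M[C]_(d * d, 1 * 1) :=
  \sum_(i < d) delta_mx i 0 *t delta_mx i 0.

Definition max_entangled d : 'M[C]_(d * d) :=
  d%:R^-1 *: (max_entangled_vec d *m adjmx (max_entangled_vec d)).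

Lemma max_entangled_vec_outer d :
  max_entangled_vec d *m adjmx (max_entangled_vec d) =
  \sum_(i < d) \sum_(j < d) delta_mx i j *t delta_mx i j.
Proof.
rewrite adjmx_sum mulmx_suml; apply: eq_bigr => i _; rewrite mulmx_sumr.
apply: eq_bigr => j _.
by rewrite adjmx_tens adjmx_delta tensmx_mul !mul_delta_mx.
Qed.

Lemma trace_max_entangled_tens d (X Y : 'M[C]_d) :
  \tr (max_entangled d *m (X *t Y)) = d%:R^-1 * \tr (X^T *m Y).
Proof.
rewrite /max_entangled -scalemxAl mxtraceZ max_entangled_vec_outer.
congr (_ * _); transitivity (\sum_(i < d) \sum_(j < d) X j i * Y j i).
  rewrite mulmx_suml raddf_sum; apply: eq_bigr => i _ /=.
  rewrite mulmx_suml raddf_sum; apply: eq_bigr => j _ /=.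
  by rewrite tensmx_mul mxtrace_tens !mxtrace_delta_mul.
by apply: eq_bigr => i _; rewrite mxE; apply: eq_bigr => j _; rewrite mxE.
Qed.

Lemma max_entangled_density d : (0 < d)%N -> density (max_entangled d).
Proof.
move=> d_gt0; have dV_ge0 : 0 <= (d%:R : C)^-1 by rewrite invr_ge0 ler0n.
split; last first.
  have := trace_max_entangled_tens (1%:M : 'M[C]_d) 1%:M.
  rewrite tensmx11 mulmx1 trmx1 mulmx1 mxtrace1 => ->.
  by rewrite mulVf // pnatr_eq0 -lt0n.
split; first by rewrite /selfadj /max_entangled adjmxZ adjmxM adjmxK geC0_conj.
move=> v; rewrite /max_entangled -scalemxAr -scalemxAl mxE mulr_ge0 //.
rewrite (mulmxA (adjmx v)) -(mulmxA (adjmx v *m _)).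
set u := adjmx v *m max_entangled_vec d.
have -> : adjmx (max_entangled_vec d) *m v = adjmx u by rewrite adjmxM adjmxK.
by rewrite mxE big_ord1 !mxE mul_conjC_ge0.
Qed.

Definition bob_observable N (l : {ffun 'I_N -> bool}) :
    'M[C]_(clifford_dim N) :=
  (sqrtC N%:R)^-1 *: signed_sum (@clifford C N) l.

Lemma signed_sum_clifford_sqr N (l : {ffun 'I_N -> bool}) :
  signed_sum (@clifford C N) l *m signed_sum (@clifford C N) l = N%:R *: 1%:M.
Proof. exact/signed_sum_sqr_anticomm/clifford_anticommutator. Qed.

Lemma observable_bob N (l : {ffun 'I_N -> bool}) :
  (0 < N)%N -> observable (bob_observable l).
Proof.
move=> N_gt0; rewrite /bob_observable; set c := sqrtC (N%:R : C).
have c_gt0 : 0 < c by rewrite sqrtC_gt0 ltr0n.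
have N_c2 : N%:R = c ^+ 2 by rewrite sqrtCK.
split.
  rewrite /selfadj adjmxZ geC0_conj ?invr_ge0 ?ltW //.
  by rewrite (selfadj_signed_sum l (@selfadj_clifford N)).
rewrite -scalemxAl -scalemxAr signed_sum_clifford_sqr !scalerA N_c2.
suff -> : c^-1 / c * c ^+ 2 = 1 by rewrite scale1r.
by field; rewrite gt_eqF.
Qed.

Lemma correlator_clifford N (l : {ffun 'I_N -> bool}) : (0 < N)%N ->
  \tr (max_entangled _ *m (signed_sum (@clifford C N) l *t bob_observable l)) =
  sqrtC N%:R.
Proof.
move=> N_gt0; rewrite /bob_observable; set c := sqrtC (N%:R : C).
have c_neq0 : c != 0 by rewrite gt_eqF // sqrtC_gt0 ltr0n.
have N_c2 : N%:R = c ^+ 2 by rewrite sqrtCK.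
have d_neq0 : (clifford_dim N)%:R != 0 :> C.
  by rewrite pnatr_eq0 -lt0n clifford_dim_gt0.
rewrite trace_max_entangled_tens trmx_signed_sum; last exact: trmx_clifford.
rewrite -scalemxAr mxtraceZ signed_sum_clifford_sqr mxtraceZ mxtrace1 N_c2.
by field; rewrite d_neq0 c_neq0.
Qed.

Lemma sum_correlators_clifford N : (0 < N)%N ->
  \sum_(l | firstbit0 l)
     `| \sum_(x < N) (-1) ^+ l x *
          \tr (max_entangled _ *m (@clifford C N x *t bob_observable l)) |
  = (2 ^ (N - 1))%:R * sqrtC N%:R.
Proof.
move=> N_gt0; rewrite -sumr_firstbit0_const //; apply: eq_bigr => l _.
rewrite trace_tens_signed_sum correlator_clifford // ger0_norm // sqrtC_ge0.
exact: ler0n.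
Qed.

End Optimum.

Theorem mainTheorem5 (C : numClosedFieldType) (N : nat) (eta : C) :
  (1 <= N)%N -> 0 <= eta <= 1 ->
  (forall (dA dB : nat) (rho : 'M[C]_(dA * dB)) (A : 'I_N -> 'M[C]_dA)
          (B : {ffun 'I_N -> bool} -> 'M[C]_dB),
      density rho ->
      (forall x, observable (A x)) ->
      (forall l, firstbit0 l -> observable (B l)) ->
      BNQ eta rho A B <= eta * (2 ^ (N - 1))%:R * sqrtC N%:R)
  /\
  (exists (dA dB : nat) (rho : 'M[C]_(dA * dB)) (A : 'I_N -> 'M[C]_dA)
          (B : {ffun 'I_N -> bool} -> 'M[C]_dB),
      [/\ density rho,
          (forall x, observable (A x)),
          (forall l, firstbit0 l -> observable (B l)),
          (forall x x' : 'I_N,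
              A x *m A x' + A x' *m A x = (2 * (x == x')%:R) *: 1%:M) &
          BNQ eta rho A B = eta * (2 ^ (N - 1))%:R * sqrtC N%:R]).
Proof.
move=> N_gt0 /andP[eta_ge0 _]; split.
  move=> dA dB rho A B rho_dens A_obs B_obs.
  by rewrite /BNQ -mulrA ler_wpM2l // sum_correlators_le.
exists (clifford_dim N), (clifford_dim N), (max_entangled C _), (@clifford C N),
  (@bob_observable C N); split.
- exact/max_entangled_density/clifford_dim_gt0.
- exact: observable_clifford.
- by move=> l _; exact: observable_bob.
- exact: clifford_anticommutator.
- by rewrite /BNQ sum_correlators_clifford // mulrA.
Qed.
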